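(* Let $\mathcal{S}=\{s_1,\dots,s_N\}$ be a finite state space, $\mathcal{A}$ a finite action space, $\gamma\in(0,1)$, and consider the real MDP $\langle\mathcal{S},\mathcal{A},\mathbb{P},R,\gamma\rangle$ and the DT MDP $\langle\mathcal{S},\mathcal{A},\mathbb{P}',R',\gamma\rangle$. Then for every deterministic policy $\pi:\mathcal{S}\to\mathcal{A}$, $$\|V^*_{\mathrm{real}}-V^\pi_{\mathrm{real}}\|\le\frac{2}{1-\gamma}\max_i\bar d(s_i,s_i)+\frac{1+\gamma}{1-\gamma}\|V^*_{\mathrm{DT}}-V^\pi_{\mathrm{DT}}\|.$$
   Context: $\mathbb{P}(\cdot|s,a),\mathbb{P}'(\cdot|s,a)$ are probability distributions on $\mathcal{S}$; $R,R':\mathcal{S}\times\mathcal{A}\to\mathbb{R}$. $V^\pi_{\mathrm{real}}$ is the unique solution of $V(s)=R(s,\pi(s))+\gamma\sum_{\tilde s}\mathbb{P}(\tilde s|s,\pi(s))V(\tilde s)$, $V^*_{\mathrm{real}}$ the unique solution of $V(s)=\max_a\{R(s,a)+\gamma\sum_{\tilde s}\mathbb{P}(\tilde s|s,a)V(\tilde s)\}$; $V^\pi_{\mathrm{DT}},V^*_{\mathrm{DT}}$ analogously with $\mathbb{P}',R'$. $\|V^*_{\mathrm{real}}-V^\pi_{\mathrm{real}}\|=\max_i\{V^*_{\mathrm{real}}(s_i)-V^\pi_{\mathrm{real}}(s_i)\}$, similarly for DT. For distributions $P,Q$ on $\mathcal{S}$ and a cost $d:\mathcal{S}\times\mathcal{S}\to[0,\infty)$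 (not required to vanish on the diagonal; first argument a real-MDP state, second a DT-MDP state), $W_1(P,Q;d)=\min_\Lambda\sum_{i,j}\lambda_{i,j}d(s_i,s_j)$ over nonnegative $N\times N$ matrices with row sums $P(s_i)$ and column sums $Q(s_j)$. Define $d_0\equiv0$, $d_n(s_i,s_j)=\max_a\{|R(s_i,a)-R'(s_j,a)|+\gamma W_1(\mathbb{P}(\cdot|s_i,a),\mathbb{P}'(\cdot|s_j,a);d_{n-1})\}$; the DT bisimulation metric $\bar d$ is the pointwise limit of the nondecreasing sequence $(d_n)$, and it satisfies $\bar d(s_i,s_j)=\max_a\{|R(s_i,a)-R'(s_j,a)|+\gamma W_1(\mathbb{P}(\cdot|s_i,a),\mathbb{P}'(\cdot|s_j,a);\bar d)\}$. *)

From HB Require Import structures.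
From mathcomp Require Import all_boot all_order all_algebra.
From mathcomp Require Import all_classical all_reals all_analysis.
Set Implicit Arguments. Unset Strict Implicit. Unset Printing Implicit Defensive.
Import Order.TTheory GRing.Theory Num.Theory.
Import numFieldTopology.Exports numFieldNormedType.Exports.
Local Open Scope classical_set_scope.
Local Open Scope ring_scope.

Section MDP.
Variables (R : realType) (S A : finType).

Definition fmax (T : finType) (f : T -> R) : R := sup (range f).

Definition is_kernel (P : S -> A -> S -> R) : Prop :=
  forall s a, (forall t, 0 <= P s a t) /\ \sum_(t : S) P s a t = 1.

Definition is_policy_value (P : S -> A -> S -> R) (Rw : S -> A -> R)
  (gamma : R) (pi : S -> A) (V : S -> R) : Prop :=
  forall s, V s = Rw s (pi s) + gamma * \sum_(t : S) P s (pi s) t * V t.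

Definition is_optimal_value (P : S -> A -> S -> R) (Rw : S -> A -> R)
  (gamma : R) (V : S -> R) : Prop :=
  forall s, V s = fmax (fun a : A => Rw s a + gamma * \sum_(t : S) P s a t * V t).

(* couplings of p (rows, real-MDP states) and q (columns, DT-MDP states) *)
Definition coupling (p q : S -> R) : set (S -> S -> R) :=
  [set c | (forall i j, 0 <= c i j) /\ (forall i, \sum_(j : S) c i j = p i)
           /\ (forall j, \sum_(i : S) c i j = q j)].

Definition W1 (p q : S -> R) (d : S -> S -> R) : R :=
  inf [set \sum_(i : S) \sum_(j : S) c i j * d i j | c in coupling p q].

Fixpoint dseq (P P' : S -> A -> S -> R) (Rw Rw' : S -> A -> R) (gamma : R)
    (n : nat) : S -> S -> R :=
  match n with
  | 0%N => fun _ _ => 0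
  | n'.+1 => fun s t => fmax (fun a : A =>
      `|Rw s a - Rw' t a| + gamma * W1 (P s a) (P' t a) (dseq P P' Rw Rw' gamma n'))
  end.

Definition dbar (P P' : S -> A -> S -> R) (Rw Rw' : S -> A -> R) (gamma : R)
    (s t : S) : R :=
  limn (fun n => dseq P P' Rw Rw' gamma n s t).

End MDP.

From HB Require Import structures.
From mathcomp Require Import all_boot all_order all_algebra.
From mathcomp Require Import all_classical all_reals all_analysis.
From mathcomp Require Import ring lra.
Import Order.TTheory GRing.Theory Num.Theory.
Import numFieldTopology.Exports numFieldNormedType.Exports.
Local Open Scope classical_set_scope.
Local Open Scope ring_scope.

(* Write Q*_real, Q*_DT for the optimal Q-functions.  By the easy direction of
   Kantorovich duality, a bound |V*_real(i) - V*_DT(j)| <= d(i,j) + e survives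
   one Bellman backup as |Q*_real(s,a) - Q*_DT(t,a)| <= d'(s,t) + gamma e, where
   d' is the next bisimulation iterate; starting from d_0 = 0 and letting n go
   to infinity gives |Q*_real(s,a) - Q*_DT(t,a)| <= dbar(s,t), hence the same
   bound for V*.  Moreover V^pi <= V* in each MDP.  With
   Delta(s) = V*_real(s) - V^pi_real(s) and E = max (V*_DT - V^pi_DT), the chain
     V*_real(s) <= V*_DT(s) + dbar(s,s) <= V^pi_DT(s) + E + dbar(s,s)
               <= Q*_DT(s,pi s) + E + dbar(s,s) <= Q*_real(s,pi s) + E + 2 dbar(s,s)
               =  V^pi_real(s) + gamma P Delta(s) + E + 2 dbar(s,s)
   gives max Delta <= (2 max dbar + E) / (1 - gamma), which is at most the
   claimed bound because E >= 0. *)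

Set Implicit Arguments. Unset Strict Implicit. Unset Printing Implicit Defensive.

Section FiniteMax.
Variables (R : realType) (T : finType).
Implicit Types (f g : T -> R) (b : R).

Lemma fmaxP f (x0 : T) : exists2 x, fmax f = f x & forall y, f y <= f x.
Proof.
have [x _ fx_max] := @arg_maxP _ _ T x0 predT f isT.
exists x => [|y]; last exact: fx_max.
apply/le_anti/andP; split.
- by apply: ge_sup; [exists (f x0), x0 | move=> _ [y _ <-]; exact: fx_max].
- apply: ub_le_sup; last by exists x.
  by exists (f x) => _ [y _ <-]; exact: fx_max.
Qed.

Lemma fmax_ub f y : f y <= fmax f.
Proof. by have [x -> fx_max] := fmaxP f y. Qed.

Lemma fmax_le f b (x0 : T) : (forall y, f y <= b) -> fmax f <= b.
Proof. by have [x -> _] := fmaxP f x0; apply. Qed.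

Lemma fmax_void f : (T -> False) -> fmax f = 0.
Proof.
move=> T0; rewrite /fmax -[X in sup X]/(f @` setT).
rewrite (_ : setT = set0) ?image_set0 ?sup0 //.
by apply/seteqP; split=> x // _; case: (T0 x).
Qed.

Lemma norm_fmaxB_le f g b (x0 : T) :
  (forall x, `|f x - g x| <= b) -> `|fmax f - fmax g| <= b.
Proof.
move=> fg_b; have [x -> f_max] := fmaxP f x0; have [y -> g_max] := fmaxP g x0.
move: (f_max y) (g_max x) (fg_b x) (fg_b y); rewrite !ler_norml.
by move=> ? ? /andP[? ?] /andP[? ?]; apply/andP; split; lra.
Qed.

Lemma fmax_le_contraction f (c gamma : R) (x0 : T) :
  gamma < 1 -> (forall x, f x <= c + gamma * fmax f) -> fmax f <= c / (1 - gamma).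
Proof.
move=> gamma_lt1 f_le; have [x fmaxE _] := fmaxP f x0.
rewrite ler_pdivlMr ?subr_gt0 //.
by have := f_le x; rewrite -fmaxE; lra.
Qed.

End FiniteMax.

Definition is_distribution (R : realType) (T : finType) (p : T -> R) : Prop :=
  (forall t, 0 <= p t) /\ \sum_t p t = 1.

Definition transport_cost (R : realType) (T : finType) (c d : T -> T -> R) : R :=
  \sum_i \sum_j c i j * d i j.

Section Distributions.
Variables (R : realType) (T : finType) (p : T -> R).
Hypothesis p_dist : is_distribution p.

Lemma sum_dist_cst (b : R) : \sum_t p t * b = b.
Proof. by rewrite -mulr_suml p_dist.2 mul1r. Qed.

Lemma ler_sum_dist (f g : T -> R) :
  (forall t, f t <= g t) -> \sum_t p t * f t <= \sum_t p t * g t.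
Proof. by move=> fg; apply: ler_sum => t _; apply: ler_wpM2l; [exact: p_dist.1|]. Qed.

Lemma sum_dist_le_cst (f : T -> R) b : (forall t, f t <= b) -> \sum_t p t * f t <= b.
Proof. by move=> fb; rewrite -[X in _ <= X]sum_dist_cst; exact: ler_sum_dist. Qed.

End Distributions.

Lemma sum_mulrBr (R : realType) (T : finType) (p f g : T -> R) :
  \sum_t p t * (f t - g t) = \sum_t p t * f t - \sum_t p t * g t.
Proof. by rewrite -sumrB; apply: eq_bigr => t _; rewrite mulrBr. Qed.

Section Wasserstein.
Variables (R : realType) (T : finType) (p q : T -> R).
Hypotheses (p_dist : is_distribution p) (q_dist : is_distribution q).
Implicit Types (c d : T -> T -> R).

Lemma product_coupling : coupling p q (fun i j => p i * q j).
Proof.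
split; first by move=> i j; apply: mulr_ge0; [exact: p_dist.1 | exact: q_dist.1].
by split=> [i|j]; [rewrite -mulr_sumr q_dist.2 mulr1 | rewrite -mulr_suml p_dist.2 mul1r].
Qed.

Lemma transport_cost_ge0 c d :
  coupling p q c -> (forall i j, 0 <= d i j) -> 0 <= transport_cost c d.
Proof.
move=> [c0 _] d0.
by apply: sumr_ge0 => i _; apply: sumr_ge0 => j _; apply: mulr_ge0.
Qed.

Lemma W1_le_cost c d : (forall i j, 0 <= d i j) -> coupling p q c ->
  W1 p q d <= transport_cost c d.
Proof.
move=> d0 c_cpl; apply: ge_inf; last by exists c.
by exists 0 => _ [c' c'_cpl <-]; exact: transport_cost_ge0.
Qed.

Lemma lb_le_W1 d (x : R) :
  (forall c, coupling p q c -> x <= transport_cost c d) -> x <= W1 p q d.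
Proof.
move=> x_le; apply: lb_le_inf; last by move=> _ [c c_cpl <-]; exact: x_le.
by exists (transport_cost (fun i j => p i * q j) d), (fun i j => p i * q j);
  first exact: product_coupling.
Qed.

Lemma W1_ge0 d : (forall i j, 0 <= d i j) -> 0 <= W1 p q d.
Proof. by move=> d0; apply: lb_le_W1 => c c_cpl; exact: transport_cost_ge0. Qed.

Lemma ler_W1 d d' : (forall i j, 0 <= d i j) -> (forall i j, d i j <= d' i j) ->
  W1 p q d <= W1 p q d'.
Proof.
move=> d0 dd'; apply: lb_le_W1 => c c_cpl; apply: le_trans (W1_le_cost d0 c_cpl) _.
have [c0 _] := c_cpl.
by apply: ler_sum => i _; apply: ler_sum => j _; apply: ler_wpM2l.
Qed.

Lemma W1_le_cst d (b : R) : (forall i j, 0 <= d i j) -> (forall i j, d i j <= b) ->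
  W1 p q d <= b.
Proof.
move=> d0 db; apply: le_trans (W1_le_cost d0 product_coupling) _.
rewrite /transport_cost; under eq_bigr do under eq_bigr do rewrite -mulrA.
under eq_bigr do rewrite -mulr_sumr.
by apply: sum_dist_le_cst => // i; exact: sum_dist_le_cst.
Qed.

Lemma coupling_sumB c (f g : T -> R) : coupling p q c ->
  \sum_i p i * f i - \sum_j q j * g j = \sum_i \sum_j c i j * (f i - g j).
Proof.
move=> [_ [c_row c_col]].
under [RHS]eq_bigr do rewrite sum_mulrBr -mulr_suml c_row.
rewrite sumrB; congr (_ - _).
by rewrite exchange_big; apply: eq_bigr => j _; rewrite -mulr_suml c_col.
Qed.

Lemma norm_sumB_le_W1 d (f g : T -> R) (e : R) :
  (forall i j, `|f i - g j| <= d i j + e) ->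
  `|\sum_i p i * f i - \sum_j q j * g j| <= W1 p q d + e.
Proof.
move=> fg_d; rewrite -lerBlDr; apply: lb_le_W1 => c c_cpl.
rewrite lerBlDr (coupling_sumB _ _ c_cpl).
have [c0 [c_row _]] := c_cpl.
have costDe : transport_cost c d + e = \sum_i \sum_j c i j * (d i j + e).
  under [RHS]eq_bigr do under eq_bigr do rewrite mulrDr.
  under [RHS]eq_bigr do rewrite big_split /= -mulr_suml c_row.
  by rewrite big_split /= sum_dist_cst.
rewrite costDe; apply: le_trans (ler_norm_sum _ _ _) _; apply: ler_sum => i _.
apply: le_trans (ler_norm_sum _ _ _) _; apply: ler_sum => j _.
by rewrite normrM ger0_norm //; apply: ler_wpM2l.
Qed.

End Wasserstein.

Lemma le_of_le_addr_geometric (R : realType) (x y M gamma : R) :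
  0 <= gamma -> gamma < 1 -> (forall n, x <= y + gamma ^+ n * M) -> x <= y.
Proof.
move=> gamma_ge0 gamma_lt1 x_le.
have y_lim : (fun n => y + gamma ^+ n * M) @ \oo --> y + 0 * M.
  apply: cvgD; first exact: cvg_cst.
  by apply: cvgM; [apply: cvg_expr; rewrite ger0_norm | exact: cvg_cst].
rewrite -[y]addr0 -(mul0r M) -(cvg_lim _ y_lim) //.
by apply: limr_ge; [exact: cvgP y_lim | near=> n; exact: x_le].
Unshelve. all: by end_near.
Qed.

Definition qvalue (R : realType) (S A : finType) (P : S -> A -> S -> R)
    (Rw : S -> A -> R) (gamma : R) (V : S -> R) (s : S) (a : A) : R :=
  Rw s a + gamma * \sum_t P s a t * V t.

Section PolicyEvaluation.
Variables (R : realType) (S A : finType) (P : S -> A -> S -> R) (Rw : S -> A -> R).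
Variable gamma : R.
Hypotheses (hP : is_kernel P) (gamma_ge0 : 0 <= gamma).
Local Notation Q := (qvalue P Rw gamma).

Lemma qvalueB V W s a : Q V s a - Q W s a = gamma * \sum_t P s a t * (V t - W t).
Proof. by rewrite /qvalue sum_mulrBr; ring. Qed.

Lemma qvalueB_le_fmax V W s a : Q V s a - Q W s a <= gamma * fmax (fun t => V t - W t).
Proof.
rewrite qvalueB; apply: ler_wpM2l => //.
by apply: sum_dist_le_cst; [exact: hP | move=> t; exact: fmax_ub].
Qed.

Lemma qvalue_le V W s a : (forall t, V t <= W t) -> Q V s a <= Q W s a.
Proof.
move=> VW; rewrite -subr_le0 qvalueB; apply: mulr_ge0_le0 => //.
by apply: sum_dist_le_cst; [exact: hP | move=> t; rewrite subr_le0].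
Qed.

Lemma qvalue_le_optimal V s a : is_optimal_value P Rw gamma V -> Q V s a <= V s.
Proof. by move=> hV; rewrite [V s]hV; exact: fmax_ub. Qed.

Lemma policy_value_le_optimal pi Vpi V : gamma < 1 ->
  is_policy_value P Rw gamma pi Vpi -> is_optimal_value P Rw gamma V ->
  forall s, Vpi s <= V s.
Proof.
move=> gamma_lt1 hVpi hV s; rewrite -subr_le0.
apply: le_trans (fmax_ub (fun t => Vpi t - V t) s) _.
rewrite -(mul0r (1 - gamma)^-1).
apply: (fmax_le_contraction s) => // t; rewrite add0r.
apply: le_trans (qvalueB_le_fmax Vpi V t (pi t)).
by rewrite [Vpi t]hVpi lerD2l lerN2; exact: qvalue_le_optimal.
Qed.

End PolicyEvaluation.

Section BisimulationMetric.
Variables (R : realType) (S A : finType) (gamma : R).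
Variables (P P' : S -> A -> S -> R) (Rw Rw' : S -> A -> R) (a0 : A).
Hypotheses (hP : is_kernel P) (hP' : is_kernel P').
Hypotheses (gamma_ge0 : 0 <= gamma) (gamma_lt1 : gamma < 1).
Implicit Types (d : S -> S -> R) (s t : S).

Definition bisim_step d s t : R :=
  fmax (fun a => `|Rw s a - Rw' t a| + gamma * W1 (P s a) (P' t a) d).

Local Notation dseq := (dseq P P' Rw Rw' gamma).
Local Notation dbar := (dbar P P' Rw Rw' gamma).

Lemma dseqS n : dseq n.+1 = bisim_step (dseq n).
Proof. by []. Qed.

Lemma bisim_step_ge0 d s t : (forall i j, 0 <= d i j) -> 0 <= bisim_step d s t.
Proof.
move=> d0; apply: le_trans (fmax_ub _ a0).
by apply: addr_ge0 => //; apply: mulr_ge0 => //; exact: W1_ge0.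
Qed.

Lemma bisim_step_le d d' s t : (forall i j, 0 <= d i j) -> (forall i j, d i j <= d' i j) ->
  bisim_step d s t <= bisim_step d' s t.
Proof.
move=> d0 dd'; apply: (fmax_le a0) => a; apply: le_trans (fmax_ub _ a).
by rewrite lerD2l; apply: ler_wpM2l => //; exact: ler_W1.
Qed.

Lemma dseq_ge0 n s t : 0 <= dseq n s t.
Proof. by elim: n s t => [//|n IHn] s t; rewrite dseqS; exact: bisim_step_ge0. Qed.

Lemma dseq_le_dseqS n s t : dseq n s t <= dseq n.+1 s t.
Proof.
elim: n s t => [|n IHn] s t; first exact: dseq_ge0.
by rewrite (dseqS n.+1); apply: bisim_step_le => //; exact: dseq_ge0.
Qed.

Lemma dseq_le_bound n s t :
  dseq n s t <= fmax (fun x : S * S * A => `|Rw x.1.1 x.2 - Rw' x.1.2 x.2|) / (1 - gamma).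
Proof.
set K := fmax _; have K_ge0 : 0 <= K by apply: le_trans (fmax_ub _ (s, s, a0)).
have bound_ge0 : 0 <= K / (1 - gamma) by rewrite divr_ge0 // subr_ge0 ltW.
elim: n s t => [//|n IHn] s t; rewrite dseqS; apply: (fmax_le a0) => a.
have reward_le : `|Rw s a - Rw' t a| <= K by exact: (fmax_ub _ (s, t, a)).
have W1_le : W1 (P s a) (P' t a) (dseq n) <= K / (1 - gamma).
  by apply: W1_le_cst => //; exact: dseq_ge0.
have Kfix : K / (1 - gamma) = K + gamma * (K / (1 - gamma)).
  by field; rewrite subr_eq0 gt_eqF.
by rewrite Kfix; apply: lerD => //; exact: ler_wpM2l.
Qed.

Lemma dseq_le_dbar n s t : dseq n s t <= dbar s t.
Proof.
have dseq_mono : nondecreasing_seq (fun m => dseq m s t).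
  by apply/nondecreasing_seqP => m; exact: dseq_le_dseqS.
apply: nondecreasing_cvgn_le => //; apply: cvgP; apply: nondecreasing_cvgn => //.
by eexists => _ [m _ <-]; exact: dseq_le_bound.
Qed.

Variables (Vr Vd : S -> R).
Hypotheses (hVr : is_optimal_value P Rw gamma Vr) (hVd : is_optimal_value P' Rw' gamma Vd).
Local Notation Qr := (qvalue P Rw gamma Vr).
Local Notation Qd := (qvalue P' Rw' gamma Vd).

Lemma qvalue_diff_le_bisim_step d (e : R) s t a :
  (forall i j, `|Vr i - Vd j| <= d i j + e) ->
  `|Qr s a - Qd t a| <= bisim_step d s t + gamma * e.
Proof.
move=> V_le; set X := \sum_i P s a i * Vr i; set Y := \sum_j P' t a j * Vd j.
have QrQd : Qr s a - Qd t a = (Rw s a - Rw' t a) + gamma * (X - Y).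
  by rewrite /qvalue /X /Y; ring.
have XY_le : gamma * `|X - Y| <= gamma * (W1 (P s a) (P' t a) d + e).
  by apply: ler_wpM2l => //; exact: norm_sumB_le_W1.
have step_ge : `|Rw s a - Rw' t a| + gamma * W1 (P s a) (P' t a) d <= bisim_step d s t.
  exact: (fmax_ub _ a).
rewrite QrQd; apply: le_trans (ler_normD _ _) _; rewrite normrM ger0_norm //.
lra.
Qed.

Lemma value_diff_le_dseq n s t :
  `|Vr s - Vd t| <= dseq n s t + gamma ^+ n * fmax (fun x : S * S => `|Vr x.1 - Vd x.2|).
Proof.
elim: n s t => [|n IHn] s t; first by rewrite add0r mul1r; exact: (fmax_ub _ (s, t)).
rewrite (hVr s) (hVd t) exprS -mulrA; apply: (norm_fmaxB_le a0) => a.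
exact: qvalue_diff_le_bisim_step IHn.
Qed.

Lemma qvalue_diff_le_dbar s t a : `|Qr s a - Qd t a| <= dbar s t.
Proof.
apply: (@le_of_le_addr_geometric _ _ _
  (gamma * fmax (fun x : S * S => `|Vr x.1 - Vd x.2|)) gamma) => // n.
rewrite mulrCA; apply: le_trans (qvalue_diff_le_bisim_step s t a (value_diff_le_dseq n)) _.
by rewrite lerD2r; exact: (dseq_le_dbar n.+1).
Qed.

Lemma optimal_value_diff_le_dbar s t : `|Vr s - Vd t| <= dbar s t.
Proof.
rewrite (hVr s) (hVd t); apply: (norm_fmaxB_le a0) => a.
exact: qvalue_diff_le_dbar.
Qed.

End BisimulationMetric.

Theorem lemma4 (R : realType) (S A : finType) (gamma : R)
  (P P' : S -> A -> S -> R) (Rw Rw' : S -> A -> R)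
  (Vstar_real Vstar_DT : S -> R)
  (hgamma0 : 0 < gamma) (hgamma1 : gamma < 1)
  (hP : is_kernel P) (hP' : is_kernel P')
  (hVr : is_optimal_value P Rw gamma Vstar_real)
  (hVd : is_optimal_value P' Rw' gamma Vstar_DT) :
  forall (pi : S -> A) (Vpi_real Vpi_DT : S -> R),
    is_policy_value P Rw gamma pi Vpi_real ->
    is_policy_value P' Rw' gamma pi Vpi_DT ->
    fmax (fun s : S => Vstar_real s - Vpi_real s)
    <= 2 / (1 - gamma) * fmax (fun s : S => dbar P P' Rw Rw' gamma s s)
       + (1 + gamma) / (1 - gamma) * fmax (fun s : S => Vstar_DT s - Vpi_DT s).
Proof.
move=> pi Vpi_r Vpi_d hVpi_r hVpi_d.
have [s0 _ | S0] := pickP (@predT S); last first.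
  by rewrite !fmax_void ?mulr0 ?addr0 // => s; have := S0 s.
have gamma_ge0 := ltW hgamma0.
set Dm := fmax (fun s => dbar P P' Rw Rw' gamma s s).
set Em := fmax (fun s => Vstar_DT s - Vpi_d s).
set Delta := fun s => Vstar_real s - Vpi_r s.
have Vpi_d_le := policy_value_le_optimal hP' gamma_ge0 hgamma1 hVpi_d hVd.
have Em_ge0 : 0 <= Em by apply: le_trans (fmax_ub _ s0); rewrite subr_ge0.
have Delta_le s : Delta s <= (2 * Dm + Em) + gamma * fmax Delta.
  have dbar_le : dbar P P' Rw Rw' gamma s s <= Dm.
    exact: (fmax_ub (fun s => dbar P P' Rw Rw' gamma s s)).
  have Em_ub : Vstar_DT s - Vpi_d s <= Em.
    exact: (fmax_ub (fun s => Vstar_DT s - Vpi_d s)).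
  have V_gap : Vstar_real s - Vstar_DT s <= dbar P P' Rw Rw' gamma s s.
    have := optimal_value_diff_le_dbar (pi s) hP hP' gamma_ge0 hgamma1 hVr hVd s s.
    by rewrite ler_norml => /andP[].
  have Q_gap : qvalue P' Rw' gamma Vstar_DT s (pi s) - qvalue P Rw gamma Vstar_real s (pi s)
      <= dbar P P' Rw Rw' gamma s s.
    have := qvalue_diff_le_dbar (pi s) hP hP' gamma_ge0 hgamma1 hVr hVd s s (pi s).
    by rewrite distrC ler_norml => /andP[].
  have Qd_ge : Vpi_d s <= qvalue P' Rw' gamma Vstar_DT s (pi s).
    by rewrite [Vpi_d s]hVpi_d; exact: qvalue_le.
  have Qr_le : qvalue P Rw gamma Vstar_real s (pi s) - Vpi_r s <= gamma * fmax Delta.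
    by rewrite [Vpi_r s]hVpi_r; exact: qvalueB_le_fmax.
  rewrite /Delta; lra.
have := fmax_le_contraction s0 hgamma1 Delta_le.
have -> : 2 / (1 - gamma) * Dm + (1 + gamma) / (1 - gamma) * Em =
    (2 * Dm + Em) / (1 - gamma) + gamma * Em / (1 - gamma).
  by field; rewrite subr_eq0 gt_eqF.
by move/le_trans; apply; rewrite lerDl divr_ge0 ?mulr_ge0 // subr_ge0 ltW.
Qed.
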